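(* Let $n\geq 2$ be an integer and $\zeta\in\mathbb{R}$. For $(x,y_{1},\ldots,y_{n})\in\mathbb{R}^{n+1}$ write $P(\zeta)=x+\zeta y_{1}+\cdots+\zeta^{n}y_{n}$ and $P^{\prime}(\zeta)=y_{1}+2\zeta y_{2}+\cdots+n\zeta^{n-1}y_{n}$. For real $Q>1$ and $R>0$ define \begin{align*} \chi_{A}(Q)&:=\{(x,y_{1},\ldots,y_{n})\in\mathbb{R}^{n+1}: \vert P(\zeta)\vert\leq Q^{-1}\},\\ \chi_{B}(R)&:=\{(x,y_{1},\ldots,y_{n})\in\mathbb{R}^{n+1}: \vert P^{\prime}(\zeta)\vert\leq R\},\\ \chi_{C}(Q)&:=\{(x,y_{1},\ldots,y_{n})\in\mathbb{R}^{n+1}: \vert y_{t}\vert\leq Q^{1/n},\ 1\leq t\leq n\}. \end{align*} Then there is a constant $E=E(n,\zeta)$ independent of $Q$ and $R$ such that for all sufficiently large $Q$ and all $R>0$, \[ \mathrm{vol}\left(\chi_{A}(Q)\cap\chi_{B}(R)\cap\chi_{C}(Q)\right)\leq E\,R\,Q^{-1/n}. \]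
   Context: $\mathrm{vol}$ denotes $(n+1)$-dimensional Lebesgue measure. *)

From HB Require Import structures.
From mathcomp Require Import all_boot all_order all_algebra.
From mathcomp Require Import all_classical all_reals all_analysis.
Set Implicit Arguments. Unset Strict Implicit. Unset Printing Implicit Defensive.
Import Order.TTheory GRing.Theory Num.Theory.
Local Open Scope classical_set_scope.
Local Open Scope ring_scope.

(* Points of R^k are represented as sequences
   s = [:: s_0; ...; s_(k-1)] of length k; only such sequences are ever
   evaluated by [iterint k].  k-dimensional Lebesgue measure of a (Borel) set
   is given, via Tonelli, by the iterated one-dimensional Lebesgue integral of
   its indicator function. *)

Fixpoint iterint (R : realType) (k : nat) (f : seq R -> \bar R) : \bar R :=
  match k with
  | 0 => f [::]
  | k'.+1 => (\int[@lebesgue_measure R]_(t in [set: R])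
                 iterint k' (fun s => f (t :: s)))%E
  end.

Definition vol (R : realType) (k : nat) (A : set (seq R)) : \bar R :=
  iterint k (fun s => (\1_A s)%:E).

(* s = [:: x; y_1; ...; y_n] *)
Definition Pz (R : realType) (n : nat) (zeta : R) (s : seq R) : R :=
  \sum_(i < n.+1) nth 0 s i * zeta ^+ i.

Definition dPz (R : realType) (n : nat) (zeta : R) (s : seq R) : R :=
  \sum_(1 <= i < n.+1) i%:R * zeta ^+ i.-1 * nth 0 s i.

Definition chiA (R : realType) (n : nat) (zeta Q : R) : set (seq R) :=
  [set s | `|Pz n zeta s| <= Q^-1].

Definition chiB (R : realType) (n : nat) (zeta Rr : R) : set (seq R) :=
  [set s | `|dPz n zeta s| <= Rr].

Definition chiC (R : realType) (n : nat) (Q : R) : set (seq R) :=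
  [set s | forall t : nat, (1 <= t <= n)%N -> `|nth 0 s t| <= Q `^ (n%:R^-1)].

From HB Require Import structures.
From mathcomp Require Import all_boot all_order all_algebra.
From mathcomp Require Import all_classical all_reals all_analysis.
From mathcomp Require Import lra ring zify.
Set Implicit Arguments. Unset Strict Implicit. Unset Printing Implicit Defensive.
Import Order.TTheory GRing.Theory Num.Theory.
Local Open Scope classical_set_scope.
Local Open Scope ring_scope.

(* Integrate the coordinates in the order x, y_1, ..., y_n.  Each of
   y_1, ..., y_(n-2) ranges over an interval of length 2 Q^(1/n), and so does x
   up to a constant, since P(zeta) - x is a combination of the y_t.  For fixed
   earlier coordinates, |P(zeta)| <= Q^-1 and |P'(zeta)| <= R confine
   (y_(n-1), y_n) to a parallelogram: eliminating y_n puts y_(n-1) in an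
   interval of length O(Q^-1 + R), and then either condition alone puts y_n in
   an interval of length O(min(Q^-1, R)), so the product of these two lengths
   is O(R Q^-1).  The volume is thus O(Q^((n-1)/n) R Q^-1) = O(R Q^(-1/n)).
   For zeta = 0 the conditions read |x| <= Q^-1 and |y_1| <= R directly. *)

Section IteratedVolume.
Variable R : realType.
Local Notation mu := (@lebesgue_measure R).

(* No measurability is needed: the integral of a nonnegative function is the
   supremum of the integrals of the simple functions below it. *)
Lemma ge0_le_integralT (f g : R -> \bar R) :
  (forall x, 0 <= f x)%E -> (forall x, f x <= g x)%E ->
  (\int[mu]_(x in [set: R]) f x <= \int[mu]_(x in [set: R]) g x)%E.
Proof.
move=> f0 fg; have g0 x : (0 <= g x)%E := le_trans (f0 x) (fg x).
rewrite !ge0_integralTE //.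
apply: ereal_sup_le => _ [h /= hf <-]; exists h => //= x.
exact: le_trans (hf x) (fg x).
Qed.

Lemma integral_scaled_indic_itv (c a r : R) : 0 <= c -> 0 <= r ->
  (\int[mu]_(x in [set: R]) (c * \1_(`[a - r, a + r]%classic) x)%:E = (c * (2 * r))%:E)%E.
Proof.
move=> c0 r0.
rewrite (@integralZl_indic _ _ _ mu setT measurableT (fun=> `[a - r, a + r]%classic) c) //;
  last by move=> /lt_le_trans /(_ c0); rewrite ltxx.
rewrite integral_indic // setIT.
transitivity (c%:E * (if (a - r)%:E < (a + r)%:E
                      then (a + r)%:E - (a - r)%:E else 0))%E.
  by congr (_ * _)%E; exact: lebesgue_measure_itv.
rewrite lte_fin; case: ifPn => [_|]; first by rewrite -EFinD -EFinM; congr (_%:E); lra.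
rewrite -leNgt => ?; have -> : r = 0 by lra.
by rewrite mule0 !mulr0.
Qed.

Lemma iterint_ge0 k (f : seq R -> \bar R) :
  (forall s, 0 <= f s)%E -> (0 <= iterint k f)%E.
Proof.
elim: k f => [|k IH] f f0 /=; first exact: f0.
by apply: integral_ge0 => t _; apply: IH.
Qed.

Lemma iterint_eq0 k (f : seq R -> \bar R) :
  (forall s, size s = k -> f s = 0%E) -> iterint k f = 0%E.
Proof.
elim: k f => [|k IH] f f0 /=; first exact: f0.
by apply: integral0_eq => t _; apply: IH => s hs; apply: f0; rewrite /= hs.
Qed.

Lemma vol_ge0 k (A : set (seq R)) : (0 <= vol k A)%E.
Proof. by apply: iterint_ge0 => s; rewrite lee_fin. Qed.

Lemma volS k (A : set (seq R)) :
  vol k.+1 A = (\int[mu]_(t in [set: R]) vol k [set s | A (t :: s)])%E.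
Proof. by []. Qed.

Lemma vol_le_prod_slabs (rs : seq R) (A : set (seq R)) (a : seq R -> R) :
  all (fun r => 0 <= r) rs ->
  (forall q t s, (size q + (size s).+1 = size rs)%N -> A (q ++ t :: s) ->
     `|t - a q| <= nth 0 rs (size q)) ->
  (vol (size rs) A <= (\prod_(r <- rs) (2 * r))%:E)%E.
Proof.
elim: rs A a => [|r rs IH] A a.
  by rewrite big_nil /vol /= indicE lee_fin; case: (_ \in _).
move=> /andP[r0 rs0] slab.
have c0 : 0 <= \prod_(x <- rs) (2 * x).
  by rewrite big_seq prodr_ge0 // => x xrs; rewrite mulr_ge0 // (allP rs0).
rewrite /= volS big_cons mulrC -(@integral_scaled_indic_itv _ (a [::]) _ c0 r0).
apply: ge0_le_integralT => t; first exact: vol_ge0.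
have [tr|rt] := lerP `|t - a [::]| r.
  rewrite indicE mem_set ?mulr1; last first.
    by rewrite /= in_itv /=; move: tr; rewrite ler_norml; lra.
  apply: (IH _ (fun q => a (t :: q))) => // q u s hs Atqs.
  by apply: (slab (t :: q) u s) => //=; rewrite addSn hs.
rewrite /vol iterint_eq0 ?lee_fin ?mulr_ge0 // => s hs; rewrite indicE memNset //= => Ats.
by move: rt; rewrite ltNge (slab [::] t s) //= hs.
Qed.

End IteratedVolume.

Section Polynomial.
Variables (R : realType) (n : nat).

Lemma nth_rcons0 (q : seq R) t i :
  nth 0 (rcons q t) i = nth 0 q i + (i == size q)%:R * t.
Proof.
rewrite nth_rcons; case: ltngtP => [_|lt_q_i|->]; rewrite ?mul0r ?addr0 //.
  by rewrite nth_default // ltnW.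
by rewrite nth_default // mul1r add0r.
Qed.

Lemma Pz_rcons zeta (q : seq R) t : (size q <= n)%N ->
  Pz n zeta (rcons q t) = Pz n zeta q + t * zeta ^+ size q.
Proof.
move=> le_q_n; rewrite /Pz.
under eq_bigr do rewrite nth_rcons0 mulrDl.
rewrite big_split /=; congr (_ + _).
under eq_bigr do rewrite -mulrA mulr_natl mulrb.
by rewrite -big_mkcond /= (big_ord1_eq _ (fun j => t * zeta ^+ j)) ltnS le_q_n.
Qed.

Lemma dPz_rcons zeta (q : seq R) t : (size q <= n)%N ->
  dPz n zeta (rcons q t) = dPz n zeta q + (size q)%:R * zeta ^+ (size q).-1 * t.
Proof.
move=> le_q_n; rewrite /dPz.
under eq_bigr do rewrite nth_rcons0 mulrDr.
rewrite big_split /=; congr (_ + _).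
under eq_bigr do rewrite mulrA mulrC mulrA mulr_natr mulrb.
rewrite -big_mkcond /= (big_nat1_eq _ (fun j => t * (j%:R * zeta ^+ j.-1))).
rewrite ltnS le_q_n andbT.
by case: (posnP (size q)) => [->|_]; rewrite ?mul0r // mulrC.
Qed.

Lemma Pz_cons zeta t (s : seq R) :
  Pz n zeta (t :: s) = t + \sum_(i < n) nth 0 s i * zeta ^+ i.+1.
Proof. by rewrite /Pz big_ord_recl /= expr0 mulr1. Qed.

Lemma Pz_x0 (s : seq R) : Pz n 0 s = nth 0 s 0.
Proof.
case: s => [|t s]; last by rewrite Pz_cons big1 ?addr0 // => i _; rewrite expr0n mulr0.
by rewrite /Pz big1 // => i _; rewrite nth_nil mul0r.
Qed.

Lemma dPz_x0 (s : seq R) : (0 < n)%N -> dPz n 0 s = nth 0 s 1.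
Proof.
move=> n_gt0; rewrite /dPz big_ltn ?ltnS // expr0 mulr1 mul1r.
rewrite big_nat_cond big1 ?addr0 // => -[|[|i]] // /andP[_ _].
by rewrite expr0n mulr0 mul0r.
Qed.

End Polynomial.

Section Slabs.
Variable R : realFieldType.

Lemma parallelogram_proj (b1 b2 al be ga de e1 e2 t u : R) :
  al * de - be * ga != 0 ->
  `|b1 + al * t + be * u| <= e1 -> `|b2 + ga * t + de * u| <= e2 ->
  `|t - (be * b2 - de * b1) / (al * de - be * ga)|
    <= (`|de| * e1 + `|be| * e2) / `|al * de - be * ga|.
Proof.
move=> D_neq0 slab1 slab2.
have -> : t - (be * b2 - de * b1) / (al * de - be * ga) =
    (de * (b1 + al * t + be * u) - be * (b2 + ga * t + de * u)) / (al * de - be * ga).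
  by field.
rewrite normf_div ler_wpM2r ?invr_ge0 // (le_trans (ler_normB _ _)) //.
by rewrite lerD // normrM ler_wpM2l.
Qed.

Lemma two_slabs_min (b1 b2 c1 c2 e1 e2 u : R) : c1 != 0 -> c2 != 0 ->
  `|b1 + c1 * u| <= e1 -> `|b2 + c2 * u| <= e2 ->
  `|u - (if e1 / `|c1| <= e2 / `|c2| then - b1 / c1 else - b2 / c2)|
    <= Num.min (e1 / `|c1|) (e2 / `|c2|).
Proof.
move=> c1_neq0 c2_neq0 slab1 slab2.
have e1E : u - - b1 / c1 = (b1 + c1 * u) / c1 by field.
have e2E : u - - b2 / c2 = (b2 + c2 * u) / c2 by field.
case: ifPn => [le12|]; last rewrite -ltNge => lt21.
  by rewrite (min_idPl le12) e1E normf_div ler_wpM2r ?invr_ge0.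
by rewrite (min_idPr (ltW lt21)) e2E normf_div ler_wpM2r ?invr_ge0.
Qed.

End Slabs.

Section Volume.
Variable R : realType.

Lemma powR_inv_natX (Q : R) k : 0 < Q ->
  (Q `^ k.+1%:R^-1) ^+ k * Q^-1 = Q `^ (- k.+1%:R^-1).
Proof.
move=> Q_gt0.
rewrite -powR_mulrn ?powR_ge0 // -powRrM -(powR_inv1 (ltW Q_gt0)) -powRD; last first.
  by apply/implyP => _; rewrite gt_eqF.
congr (_ `^ _); rewrite -[k.+1]addn1 natrD.
have : (0 : R) < k.+1%:R by rewrite ltr0Sn.
by rewrite -natr1 => ?; field; lra.
Qed.

Lemma powR_ge1 (Q r : R) : 1 <= Q -> 0 <= r -> 1 <= Q `^ r.
Proof. by move=> Q_ge1 r_ge0; rewrite -(powRr0 Q) ler_powR. Qed.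

Lemma chiC_coord n (Q : R) q t s : chiC n Q (q ++ t :: s) ->
  (1 <= size q <= n)%N -> `|t| <= Q `^ n%:R^-1.
Proof. by move=> /(_ (size q)); rewrite nth_cat ltnn subnn. Qed.

Lemma vol_chi_zeta0 m (Q Rr : R) : 1 < Q -> 0 < Rr ->
  (vol m.+3 (chiA m.+2 0 Q `&` chiB m.+2 0 Rr `&` chiC m.+2 Q)
    <= (2 ^+ m.+3 * Rr * Q `^ (- m.+2%:R^-1))%:E)%E.
Proof.
move=> Q_gt1 Rr_gt0; set Kb := Q `^ m.+2%:R^-1.
have Kb_ge1 : 1 <= Kb by rewrite powR_ge1 ?ltW.
have size_radii : size [:: Q^-1, Rr & nseq m.+1 Kb] = m.+3 by rewrite /= size_nseq.
rewrite -[X in vol X]size_radii.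
apply: le_trans (vol_le_prod_slabs (a := fun=> 0) _ _) _.
- rewrite /= all_nseq (ltW Rr_gt0) (le_trans ler01 Kb_ge1) orbT !andbT.
  by rewrite ltW // invr_gt0; lra.
- move=> q t s size_qs [[Aqts Bqts] Cqts]; rewrite subr0.
  case: q size_qs Aqts Bqts Cqts => [|x [|y q]] //= size_qs Aqts Bqts Cqts.
  + by move: Aqts; rewrite /chiA /= Pz_x0.
  + by move: Bqts; rewrite /chiB /= dPz_x0.
  + have lt_q_m1 : (size q < m.+1)%N.
      by move: size_qs; rewrite size_nseq !addSn => -[<-]; rewrite addnS ltnS leq_addr.
    have -> : (Kb :: nseq m Kb)`_(size q) = Kb by rewrite -[_ :: _]/(nseq m.+1 Kb) nth_nseq lt_q_m1.
    exact: (chiC_coord (q := [:: x, y & q]) Cqts).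
rewrite !big_cons big_nseq iter_mulr_1 lee_fin le_eqVlt; apply/orP; left; apply/eqP.
rewrite -(powR_inv_natX m.+1 (lt_trans ltr01 Q_gt1)) -/Kb.
by rewrite exprMn !exprS; ring.
Qed.

End Volume.

Section NonzeroZeta.
Variables (R : realType) (m : nat) (zeta Q Rr : R).
Hypothesis zeta_neq0 : zeta != 0.
Local Notation n := m.+2.
Local Notation w := (zeta ^+ m.+1).

Definition penult_center (q : seq R) : R :=
  (zeta ^+ n * dPz n zeta q - n%:R * w * Pz n zeta q) / w ^+ 2.

Definition penult_radius : R :=
  (`|n%:R * w| * Q^-1 + `|zeta ^+ n| * Rr) / `|w ^+ 2|.

Definition last_center (q : seq R) : R :=
  if Q^-1 / `|zeta ^+ n| <= Rr / `|n%:R * w|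
  then - Pz n zeta q / zeta ^+ n else - dPz n zeta q / (n%:R * w).

Definition last_radius : R := Num.min (Q^-1 / `|zeta ^+ n|) (Rr / `|n%:R * w|).

Lemma chi_first_slab t s : chiA n zeta Q (t :: s) -> chiC n Q (t :: s) ->
  `|t| <= Q^-1 + Q `^ n%:R^-1 * \sum_(i < n) `|zeta| ^+ i.+1.
Proof.
rewrite /chiA /= Pz_cons => At Ct.
set S := \sum_(i < n) _ in At.
have S_le : `|S| <= Q `^ n%:R^-1 * \sum_(i < n) `|zeta| ^+ i.+1.
  rewrite mulr_sumr (le_trans (ler_norm_sum _ _ _)) // ler_sum // => i _.
  by rewrite normrM normrX ler_wpM2r ?exprn_ge0 // (Ct i.+1) // ltn_ord.
by have := ler_normB (t + S) S; rewrite addrK; lra.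
Qed.

Lemma chi_penult_slab q t u : size q = m.+1 ->
  chiA n zeta Q (q ++ [:: t; u]) -> chiB n zeta Rr (q ++ [:: t; u]) ->
  `|t - penult_center q| <= penult_radius.
Proof.
move=> size_q; rewrite /chiA /chiB /= -[q ++ _]/(q ++ [:: t] ++ [:: u]) catA !cats1.
rewrite Pz_rcons ?dPz_rcons ?size_rcons ?size_q // Pz_rcons ?dPz_rcons ?size_q //=.
move=> At Bt; rewrite [t * _]mulrC [u * _]mulrC in At.
have D_eq : w * (n%:R * w) - zeta ^+ n * (m.+1%:R * zeta ^+ m) = w ^+ 2.
  by rewrite -natr1 !exprS; ring.
have := parallelogram_proj _ At Bt; rewrite D_eq; apply.
by rewrite sqrf_eq0 expf_neq0.
Qed.

Lemma chi_last_slab q t : size q = n ->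
  chiA n zeta Q (rcons q t) -> chiB n zeta Rr (rcons q t) ->
  `|t - last_center q| <= last_radius.
Proof.
move=> size_q; rewrite /chiA /chiB /= Pz_rcons ?dPz_rcons ?size_q //= mulrC => At Bt.
apply: two_slabs_min At Bt; first exact: expf_neq0.
by rewrite mulf_neq0 ?expf_neq0 // pnatr_eq0.
Qed.

Lemma penult_radius_ge0 : 0 < Q -> 0 <= Rr -> 0 <= penult_radius.
Proof.
by move=> Q_gt0 Rr_ge0; rewrite divr_ge0 // addr_ge0 // mulr_ge0 // invr_ge0 ltW.
Qed.

Lemma last_radius_ge0 : 0 < Q -> 0 <= Rr -> 0 <= last_radius.
Proof. by move=> Q_gt0 Rr_ge0; rewrite le_min !divr_ge0 // invr_ge0 ltW. Qed.

Lemma penult_radius_mul_last_radius : 0 < Q -> 0 <= Rr ->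
  penult_radius * last_radius <= 2 * Rr * Q^-1 / `|w ^+ 2|.
Proof.
move=> Q_gt0 Rr_ge0; have Q'_ge0 : 0 <= Q^-1 by rewrite invr_ge0 ltW.
have nw_gt0 : 0 < `|n%:R * w| by rewrite normr_gt0 mulf_neq0 ?expf_neq0 // pnatr_eq0.
have zn_gt0 : 0 < `|zeta ^+ n| by rewrite normr_gt0 expf_neq0.
have last_le1 : last_radius <= Q^-1 / `|zeta ^+ n| by rewrite /last_radius ge_min lexx.
have last_le2 : last_radius <= Rr / `|n%:R * w| by rewrite /last_radius ge_min lexx orbT.
rewrite /penult_radius mulrAC ler_wpM2r ?invr_ge0 // mulrDl.
have -> : 2 * Rr * Q^-1 = `|n%:R * w| * Q^-1 * (Rr / `|n%:R * w|)
    + `|zeta ^+ n| * Rr * (Q^-1 / `|zeta ^+ n|).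
  by field; rewrite !gt_eqF.
by rewrite lerD // ler_wpM2l // mulr_ge0.
Qed.

Definition slab_center (q : seq R) : R :=
  if (size q <= m)%N then 0 else if size q == m.+1 then penult_center q else last_center q.

Definition slab_radii : seq R :=
  Q^-1 + Q `^ n%:R^-1 * \sum_(i < n) `|zeta| ^+ i.+1
    :: nseq m (Q `^ n%:R^-1) ++ [:: penult_radius; last_radius].

Lemma chi_slabs q t s : (size q + (size s).+1 = n.+1)%N ->
  (chiA n zeta Q `&` chiB n zeta Rr `&` chiC n Q) (q ++ t :: s) ->
  `|t - slab_center q| <= nth 0 slab_radii (size q).
Proof.
move=> size_qs [[Aqts Bqts] Cqts]; rewrite /slab_center.
case: q => [|x q] in size_qs Aqts Bqts Cqts *.
  by rewrite subr0; exact: chi_first_slab Aqts Cqts.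
rewrite /= nth_cat size_nseq eqSS.
have [lt_q_m|le_m_q] := ltnP (size q) m.
  rewrite subr0 nth_nseq lt_q_m; apply: (chiC_coord (q := x :: q) Cqts).
  by rewrite /= ltnW // ltnW.
move: size_qs; rewrite /= addSn addnS => -[size_qs].
case: s => [|u [|v s]] /= in size_qs Aqts Bqts Cqts *.
- have size_q : size q = m.+1 by rewrite -size_qs addn0.
  rewrite size_q eqn_leq ltnn subSnn /=.
  rewrite cats1 in Aqts Bqts.
  by apply: (chi_last_slab (q := x :: q)) Aqts Bqts; rewrite /= size_q.
- have size_q : size q = m by apply: succn_inj; rewrite -addn1.
  rewrite size_q eqxx subnn /=.
  by apply: (chi_penult_slab (q := x :: q)) Aqts Bqts; rewrite /= size_q.
- by move: size_qs le_m_q; lia.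
Qed.

Lemma prod_slab_radii_le : 1 < Q -> 0 < Rr ->
  \prod_(r <- slab_radii) (2 * r) <=
    2 ^+ m.+4 * (1 + \sum_(i < n) `|zeta| ^+ i.+1) / `|w ^+ 2| * Rr * Q `^ (- n%:R^-1).
Proof.
move=> Q_gt1 Rr_gt0; have Q_gt0 : 0 < Q by lra.
rewrite -(powR_inv_natX m.+1 Q_gt0); set Kb := Q `^ n%:R^-1; set Z := \sum_(i < n) _.
have Kb_ge1 : 1 <= Kb by rewrite powR_ge1 ?ltW.
have Z_ge0 : 0 <= Z by rewrite sumr_ge0 // => i _; rewrite exprn_ge0.
have Q'_ge0 : 0 <= Q^-1 by rewrite invr_ge0 ltW.
have Q'_le1 : Q^-1 <= 1 by rewrite invf_le1 // ltW.
have X0_le : Q^-1 + Kb * Z <= Kb * (1 + Z) by rewrite mulrDr mulr1; lra.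
have radii_le := penult_radius_mul_last_radius Q_gt0 (ltW Rr_gt0).
rewrite big_cons big_cat big_nseq iter_mulr_1 !big_cons big_nil /= mulr1 -/Kb -/Z.
have -> : 2 * (Q^-1 + Kb * Z) * ((2 * Kb) ^+ m * (2 * penult_radius * (2 * last_radius)))
    = 8 * (Q^-1 + Kb * Z) * (2 * Kb) ^+ m * (penult_radius * last_radius) by ring.
apply: (@le_trans _ _ (8 * (Kb * (1 + Z)) * (2 * Kb) ^+ m * (2 * Rr * Q^-1 / `|w ^+ 2|))).
  have Kb_ge0 : 0 <= Kb by lra.
  apply: ler_pM; last exact: radii_le.
  - by rewrite !mulr_ge0 ?exprn_ge0 ?addr_ge0 ?mulr_ge0.
  - by rewrite mulr_ge0 ?penult_radius_ge0 ?last_radius_ge0 // ltW.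
  - by rewrite ler_wpM2r ?exprn_ge0 ?mulr_ge0 // ler_wpM2l.
by rewrite exprMn !exprS le_eqVlt; apply/orP; left; apply/eqP; ring.
Qed.

Lemma vol_chi_zeta_neq0 : 1 < Q -> 0 < Rr ->
  (vol n.+1 (chiA n zeta Q `&` chiB n zeta Rr `&` chiC n Q)
    <= (2 ^+ m.+4 * (1 + \sum_(i < n) `|zeta| ^+ i.+1) / `|w ^+ 2|
        * Rr * Q `^ (- n%:R^-1))%:E)%E.
Proof.
move=> Q_gt1 Rr_gt0; have Q_gt0 : 0 < Q by lra.
have size_radii : size slab_radii = n.+1 by rewrite /= size_cat size_nseq addn2.
rewrite -[X in vol X]size_radii.
apply: le_trans (vol_le_prod_slabs (a := slab_center) _ _) _.
- have Kb_ge0 : 0 <= Q `^ n%:R^-1 by rewrite powR_ge0.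
  have Z_ge0 : 0 <= \sum_(i < n) `|zeta| ^+ i.+1.
    by rewrite sumr_ge0 // => i _; rewrite exprn_ge0.
  have X0_ge0 : 0 <= Q^-1 + Q `^ n%:R^-1 * \sum_(i < n) `|zeta| ^+ i.+1.
    by rewrite addr_ge0 ?mulr_ge0 // invr_ge0 ltW.
  by rewrite /= all_cat all_nseq X0_ge0 Kb_ge0 orbT /= penult_radius_ge0 ?last_radius_ge0 // ltW.
- by rewrite size_radii; exact: chi_slabs.
- by rewrite lee_fin prod_slab_radii_le.
Qed.

End NonzeroZeta.

Theorem lemma1 (R : realType) (n : nat) (zeta : R) :
  (2 <= n)%N ->
  exists E : R, exists Q0 : R, forall Q Rr : R,
    1 < Q -> Q0 <= Q -> 0 < Rr ->
    (vol n.+1 (chiA n zeta Q `&` chiB n zeta Rr `&` chiC n Q)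
      <= (E * Rr * Q `^ (- n%:R^-1))%:E)%E.
Proof.
case: n => [|[|m]] // _; have [->|zeta_neq0] := eqVneq zeta 0.
  by exists (2 ^+ m.+3), 1 => Q Rr Q_gt1 _ Rr_gt0; exact: vol_chi_zeta0.
exists (2 ^+ m.+4 * (1 + \sum_(i < m.+2) `|zeta| ^+ i.+1) / `|zeta ^+ m.+1 ^+ 2|), 1.
by move=> Q Rr Q_gt1 _ Rr_gt0; exact: vol_chi_zeta_neq0.
Qed.
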